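(* In the linear deterministic diamond network with a disturbing node with gains $n_1,n_2,n_3,n_4,m$, suppose $n_1>n_2$, $n_3\ge n_4$ and $m\le n_1$. Then the linear capacity is $$C=\min\big(n_1-m+\min(m,n_4),\ n_3\big).$$
   Context: The shift matrix $Q$ is the $q\times q$ matrix over $\mathbb{F}_2$ with $Q_{i+1,i}=1$ for $1\le i\le q-1$ and all other entries $0$, where $q=\max(n_1,n_2,n_3,n_4,m)$ and all gains are nonnegative integers. Network: source $S$, relays $A,B$, destination $D$, disturbing node $M$; gains $n_1$ ($S\to A$), $n_2$ ($S\to B$), $n_3$ ($A\to D$), $n_4$ ($B\to D$), $m$ ($M\to A$ and $M\to B$). Each node transmits $x_i\in\mathbb{F}_2^q$ and receives $y_j=\sum_{k:(k,j)\text{ an edge}}Q^{q-n_{(k,j)}}x_k$; relays use linear maps $x_A=G_Ay_A$, $x_B=G_By_B$ with $G_A,G_B$ arbitrary $q\times q$ matrices over $\mathbb{F}_2$. Then $y_D=G_Sx_S+G_Mx_M$ with $G_S=Q^{q-n_3}G_AQ^{q-n_1}+Q^{q-n_4}G_BQ^{q-n_2}$ and $G_M=Q^{q-n_3}G_AQ^{q-m}+Q^{q-n_4}G_BQ^{q-m}$. The rate $R(G_A,G_B)$ is the maximum dimension of a subspace $\mathcal{X}\subseteq\mathbb{F}_2^q$ such that for all $x_S,x_S'\in\mathcal{X}$, $x_M,x_M'\in\mathbb{F}_2^q$, $G_Sx_S+G_Mx_M=G_Sx_S'+G_Mx_M'$ implies $x_S=x_S'$. The linear capacity is $C=\max_{G_A,G_B}R(G_A,G_B)$.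 *)

From mathcomp Require Import all_boot all_order all_algebra.
Set Implicit Arguments. Unset Strict Implicit. Unset Printing Implicit Defensive.
Import GRing.Theory.
Local Open Scope ring_scope.

Notation F2 := 'F_2.

Definition mxpow (q : nat) (A : 'M[F2]_q) (k : nat) : 'M[F2]_q :=
  iter k (mulmx A) 1%:M.

(* Shift matrix: Q_{i+1,i} = 1 (1-based), i.e. Q i j = 1 iff i = j+1 (0-based). *)
Definition shiftQ (q : nat) : 'M[F2]_q :=
  \matrix_(i < q, j < q) (((i : nat) == (j : nat).+1)%:R : F2).

Definition chan (q n : nat) : 'M[F2]_q := mxpow (shiftQ q) (q - n).

Definition qdim (n1 n2 n3 n4 m : nat) : nat :=
  maxn n1 (maxn n2 (maxn n3 (maxn n4 m))).

Section Network.
Variables (n1 n2 n3 n4 m : nat).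
Local Notation q := (qdim n1 n2 n3 n4 m).

Definition GS (GA GB : 'M[F2]_q) : 'M[F2]_q :=
  chan q n3 *m GA *m chan q n1 + chan q n4 *m GB *m chan q n2.
Definition GM (GA GB : 'M[F2]_q) : 'M[F2]_q :=
  chan q n3 *m GA *m chan q m + chan q n4 *m GB *m chan q m.

(* A subspace X of F_2^q is represented as the row space of a q x q matrix B;
   a column vector x lies in X iff (x^T <= B)%MS; dim X = \rank B. *)
Definition decodable (GA GB : 'M[F2]_q) (B : 'M[F2]_q) : bool :=
  [forall xS : 'cV[F2]_q, forall xS' : 'cV[F2]_q,
   forall xM : 'cV[F2]_q, forall xM' : 'cV[F2]_q,
     [&& (xS^T <= B)%MS, (xS'^T <= B)%MS &
       GS GA GB *m xS + GM GA GB *m xM == GS GA GB *m xS' + GM GA GB *m xM']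
     ==> (xS == xS')].

Definition rate (GA GB : 'M[F2]_q) : nat :=
  \max_(B : 'M[F2]_q | decodable GA GB B) \rank B.

Definition lin_capacity : nat :=
  \max_(GA : 'M[F2]_q) \max_(GB : 'M[F2]_q) rate GA GB.
End Network.

From mathcomp Require Import all_boot all_order all_algebra.
From mathcomp Require Import zify.

(* Over F_2, decodability of x_S from y_D = G_S x_S + G_M x_M means that a
   subspace X meets trivially the space of x with G_S x in the column space of
   G_M; hence R(G_A, G_B) is the rank of G_S modulo G_M, i.e. of
   G_S^T *m cokermx G_M^T.  Every channel matrix is a 0/1 "selection" matrix,
   so all products reduce to index arithmetic; level i of a signal (its i-th
   coordinate) survives a channel of gain n iff i < n.

   Upper bound: the output of G_S passes through Q^{q-n3} or Q^{q-n4}, both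
   with range inside that of Q^{q-n3}, so the rank is at most n3.  Split the
   source levels into [0, n1-m), [n1-m, n1) and [n1, q): the last reach no
   relay; the middle ones reach A at exactly the positions of M's levels
   [0, m), so modulo G_M they only pass through B and contribute at most
   min(m, n4); the first contribute at most n1 - m.

   Lower bound: with k = min(m, n4) and t = min(n1-m+k, n3), both relays
   forward the k levels carrying M's signal to the same k levels of D, where
   the two copies cancel over F_2, so G_M = 0; relay A also forwards t source
   levels, and since n2 < n1 the resulting t x t block of G_S is unitriangular. *)

Set Implicit Arguments.
Unset Strict Implicit.
Unset Printing Implicit Defensive.

Import GRing.Theory.
Local Open Scope ring_scope.

Section SelectionMatrices.
Variable R : pzSemiRingType.

Definition selmx r c (f : nat -> nat) (P : pred nat) : 'M[R]_(r, c) :=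
  \matrix_(i < r, j < c) (P i && ((j : nat) == f i))%:R.

Lemma mulmx_selmx r c d f (P : pred nat) g (Q : pred nat) :
  selmx r c f P *m selmx c d g Q =
  selmx r d (g \o f) (fun i => [&& P i, (f i < c)%N & Q (f i)]).
Proof.
apply/matrixP => i j; rewrite !mxE.
have [/and3P[Pi fc Qf] | nPQ] := boolP [&& P i, (f i < c)%N & Q (f i)].
  rewrite (bigD1 (Ordinal fc)) //= big1 ?addr0 => [|l ne]; rewrite !mxE.
    by rewrite Pi eqxx Qf mul1r.
  rewrite (_ : (l : nat) == f i = false) ?andbF ?mul0r //.
  by apply: contraNF ne => /eqP eq_l; apply/eqP/val_inj.
apply: big1 => l _; rewrite !mxE; have [eq_l|] := eqP; last by rewrite andbF mul0r.
by move: nPQ; rewrite -eq_l ltn_ord /=; case: (P i); case: (Q l); rewrite ?mul0r ?mulr0.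
Qed.

Lemma eq_selmx r c f (P : pred nat) f' (P' : pred nat) :
  (forall i, (i < r)%N -> (P i && (f i < c)%N) = (P' i && (f' i < c)%N)) ->
  (forall i, (i < r)%N -> P i -> (f i < c)%N -> f i = f' i) ->
  selmx r c f P = selmx r c f' P'.
Proof.
move=> eqPc eqf; apply/matrixP => i j; rewrite !mxE; congr (nat_of_bool _)%:R.
have := eqPc i (ltn_ord i).
have [/andP[Pi fc]|nPc] := boolP (P i && (f i < c)%N).
  by rewrite Pi (eqf i (ltn_ord i) Pi fc) => /esym/andP[-> _].
move=> nPc'; apply/idP/idP => /andP[Pi /eqP eq_j].
  by move: nPc; rewrite Pi -eq_j ltn_ord.
by move: nPc'; rewrite Pi -eq_j ltn_ord.
Qed.

Lemma selmx_eq0 r c f (P : pred nat) :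
  (forall i, (i < r)%N -> P i -> (c <= f i)%N) -> selmx r c f P = 0.
Proof.
move=> Pf; apply/matrixP => i j; rewrite !mxE.
case Pi: (P i) => //=; case: eqP => // eq_j.
by have := Pf i (ltn_ord i) Pi; rewrite -eq_j leqNgt ltn_ord.
Qed.

Lemma selmx_id n : selmx n n id predT = 1%:M.
Proof. by apply/matrixP => i j; rewrite !mxE eq_sym. Qed.

End SelectionMatrices.

Section Windows.
Variables (R : pzSemiRingType) (q : nat).

Definition window a b : 'M[R]_q := selmx R q q id (fun i => a <= i < b)%N.

Lemma window_full : window 0 q = 1%:M.
Proof. by apply/matrixP => i j; rewrite !mxE ltn_ord eq_sym. Qed.

Lemma add_window a b c : (a <= b <= c)%N -> window a b + window b c = window a c.
Proof.
move=> /andP[le_ab le_bc].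
apply/matrixP => i j; rewrite !mxE -natrD; congr (_ %:R).
by case: (j == i :> nat); rewrite ?andbF ?andbT //; lia.
Qed.

End Windows.

Lemma mxrank_selmx_interval (F : fieldType) r c a b f :
  (\rank (selmx F r c f (fun i => a <= i < b)%N) <= b - a)%N.
Proof.
have -> : selmx F r c f (fun i => a <= i < b)%N =
          selmx F r (b - a) (subn^~ a) (fun i => a <= i < b)%N *m
          selmx F (b - a) c (fun j => f (j + a)%N) predT.
  rewrite mulmx_selmx; apply: eq_selmx => i _ /=.
    case/boolP: (a <= i < b)%N => //= /andP[le_ai lt_ib].
    by rewrite subnK // (_ : i - a < b - a)%N //; lia.
  by move=> /andP[le_ai _] _; rewrite subnK.
exact: leq_trans (mxrankM_maxr _ _) (rank_leq_row _).
Qed.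

Lemma mxrank_window (F : fieldType) q a b : (\rank (window F q a b) <= b - a)%N.
Proof. exact: mxrank_selmx_interval. Qed.

Lemma mxrank_1_add_selmx_strict_lower (F : fieldType) t f (P : pred nat) :
  (forall i, (i < t)%N -> P i -> (f i < i)%N) ->
  \rank (1%:M + selmx F t t f P)%R = t.
Proof.
move=> lt_fi; apply: mxrank_unit; rewrite unitmxE det_trig.
  rewrite big1 ?unitr1 // => i _; rewrite !mxE eqxx.
  case Pi: (P i) => /=; last by rewrite addr0.
  by rewrite (gtn_eqF (lt_fi i (ltn_ord i) Pi)) addr0.
apply/is_trig_mxP => i j lt_ij; rewrite !mxE (_ : i == j = false) ?add0r; last exact: ltn_eqF.
case Pi: (P i) => //=.
by rewrite (gtn_eqF (ltn_trans (lt_fi i (ltn_ord i) Pi) lt_ij)).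
Qed.

Lemma mxrank_le_coker (F : fieldType) r n p (S : 'M[F]_(r, n)) (M : 'M_(p, n)) :
  (\rank S <= \rank (S *m cokermx M) + \rank M)%N.
Proof.
rewrite -{1}(mxrank_mul_ker S (cokermx M)) leq_add2l mxrankS //.
by rewrite submxE -sub_kermx capmxSr.
Qed.

Lemma shiftQ_selmx q : shiftQ q = selmx F2 q q (subn^~ 1) (leq 1).
Proof.
apply/matrixP => i j; rewrite !mxE; congr (nat_of_bool _)%:R.
by apply/idP/idP; lia.
Qed.

Lemma mxpow_shiftQ q k :
  mxpow (shiftQ q) k = selmx F2 q q (subn^~ k) (leq k).
Proof.
elim: k => [|k IHk].
  by apply/matrixP => i j; rewrite !mxE subn0 eq_sym.
rewrite /mxpow iterS -/(mxpow _ k) IHk shiftQ_selmx mulmx_selmx.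
by apply: eq_selmx => i lt_iq /=; [apply/idP/idP | move=> *]; lia.
Qed.

Lemma chan_selmx q n : chan q n = selmx F2 q q (subn^~ (q - n)%N) (leq (q - n)%N).
Proof. exact: mxpow_shiftQ. Qed.

Lemma trmx_chan q n : (chan q n)^T = selmx F2 q q (addn^~ (q - n)%N) predT.
Proof.
apply/matrixP => i j; rewrite chan_selmx !mxE /=; congr (nat_of_bool _)%:R.
by apply/idP/idP; lia.
Qed.

Lemma mxrank_chan q n : (\rank (chan q n) <= n)%N.
Proof.
have -> : chan q n = selmx F2 q q (subn^~ (q - n)%N) (fun i => q - n <= i < q)%N.
  by rewrite chan_selmx; apply: eq_selmx => i lt_iq /=; [apply/idP/idP|]; lia.
by apply: leq_trans (mxrank_selmx_interval _ _ _ _ _ _) _; lia.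
Qed.

Lemma window_mul_trchan_eq0 q a b n :
  (n <= a)%N -> window F2 q a b *m (chan q n)^T = 0.
Proof.
by move=> le_na; rewrite trmx_chan mulmx_selmx selmx_eq0 // => i lt_iq /=; lia.
Qed.

Lemma window_mul_trchan_shift q a b k d : (k <= q)%N -> (d <= a)%N -> (d <= k)%N ->
  window F2 q a b *m (chan q k)^T =
  selmx F2 q q (subn^~ d) (fun i => a <= i < b)%N *m (chan q (k - d))^T.
Proof.
move=> le_kq le_da le_dk; rewrite !trmx_chan !mulmx_selmx.
by apply: eq_selmx => i lt_iq /=; [apply/idP/idP | move=> *]; lia.
Qed.

Lemma addmx_F2_self r c (A : 'M[F2]_(r, c)) : A + A = 0.
Proof. by apply/matrixP => i j; rewrite !mxE (addrr_pchar2 (pchar_Fp _)). Qed.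

Section Network.
Variables n1 n2 n3 n4 m : nat.
Local Notation q := (qdim n1 n2 n3 n4 m).
Local Notation GS := (@GS n1 n2 n3 n4 m).
Local Notation GM := (@GM n1 n2 n3 n4 m).
Local Notation decodable := (@decodable n1 n2 n3 n4 m).
Local Notation rate := (@rate n1 n2 n3 n4 m).
Local Notation c n := (chan q n).

Definition GSmodGM (GA GB : 'M[F2]_q) : 'M[F2]_q :=
  (GS GA GB)^T *m cokermx (GM GA GB)^T.

Lemma decodable_cap_kermx GA GB B (u : 'rV[F2]_q) :
  decodable GA GB B -> (u <= B)%MS -> (u <= kermx (GSmodGM GA GB))%MS -> u = 0.
Proof.
move=> /forallP decB uB; rewrite sub_kermx mulmxA -submxE => /submxP[v def_uGS].
have GSu : GS GA GB *m u^T = GM GA GB *m v^T.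
  by apply: trmx_inj; rewrite !trmx_mul !trmxK.
have := decB u^T => /forallP/(_ 0)/forallP/(_ (- v^T))/forallP/(_ 0).
rewrite trmxK uB trmx0 sub0mx !mulmx0 mulmxN addr0 GSu subrr eqxx => /eqP uT0.
by rewrite -[u]trmxK uT0 trmx0.
Qed.

Lemma rate_le_mxrank_GSmodGM GA GB : (rate GA GB <= \rank (GSmodGM GA GB))%N.
Proof.
apply/bigmax_leqP => B decB.
have capB0 : (B :&: kermx (GSmodGM GA GB))%MS = 0.
  apply/eqP; rewrite -submx0; apply/row_subP => i.
  have sB := submx_trans (row_sub i _) (capmxSl B (kermx (GSmodGM GA GB))).
  have sK := submx_trans (row_sub i _) (capmxSr B (kermx (GSmodGM GA GB))).
  by rewrite (decodable_cap_kermx decB sB sK) sub0mx.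
rewrite -(mxrank_mul_ker B (GSmodGM GA GB)) capB0 mxrank0 addn0.
exact: mxrankM_maxr.
Qed.

Lemma mxrank_GSmodGM_le_rate GA GB : (\rank (GSmodGM GA GB) <= rate GA GB)%N.
Proof.
set K := kermx (GSmodGM GA GB).
have rankKC : \rank (GSmodGM GA GB) = \rank K^C.
  by rewrite mxrank_compl mxrank_ker subKn ?rank_leq_col.
rewrite rankKC; apply: leq_bigmax_cond; apply/forallP => xS.
apply/forallP => xS'; apply/forallP => xM; apply/forallP => xM'.
apply/implyP => /and3P[xSKC xS'KC /eqP eqD].
have GSdiff : GS GA GB *m (xS - xS') = GM GA GB *m (xM' - xM).
  rewrite !mulmxBr -[GS GA GB *m xS](addrK (GM GA GB *m xM)) eqD.
  by rewrite addrC addrA addKr.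
have uKC : ((xS - xS')^T <= K^C)%MS by rewrite linearB /= addmx_sub // eqmx_opp.
have uK : ((xS - xS')^T <= K)%MS.
  by rewrite sub_kermx mulmxA -submxE -trmx_mul GSdiff trmx_mul submxMl.
have : ((xS - xS')^T <= K :&: K^C)%MS by rewrite sub_capmx uK.
by rewrite capmx_compl submx0 -trmx0 (inj_eq trmx_inj) subr_eq0.
Qed.

Lemma rate_GSmodGM GA GB : rate GA GB = \rank (GSmodGM GA GB).
Proof. by apply/eqP; rewrite eqn_leq rate_le_mxrank_GSmodGM mxrank_GSmodGM_le_rate. Qed.

Lemma rate_le_lin_capacity GA GB : (rate GA GB <= lin_capacity n1 n2 n3 n4 m)%N.
Proof.
apply: leq_trans (leq_bigmax GA); exact: (leq_bigmax (F := fun GB => rate GA GB)).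
Qed.

Lemma qdim_ge : [/\ n1 <= q, n2 <= q, n3 <= q, n4 <= q & m <= q]%N.
Proof. by rewrite /qdim; split; lia. Qed.

Lemma trmx_GS GA GB :
  (GS GA GB)^T = (c n1)^T *m (GA^T *m (c n3)^T) + (c n2)^T *m (GB^T *m (c n4)^T).
Proof. by rewrite linearD /= !trmx_mul. Qed.

Lemma trmx_GM GA GB :
  (GM GA GB)^T = (c m)^T *m (GA^T *m (c n3)^T) + (c m)^T *m (GB^T *m (c n4)^T).
Proof. by rewrite linearD /= !trmx_mul. Qed.

Lemma mxrank_GSmodGM_le_n3 GA GB : (n4 <= n3)%N -> (\rank (GSmodGM GA GB) <= n3)%N.
Proof.
move=> le_n43; have [_ _ q3 q4 _] := qdim_ge.
have c4_c3 : ((c n4)^T <= (c n3)^T)%MS.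
  have -> : (c n4)^T = selmx F2 q q (addn^~ (n3 - n4)%N) predT *m (c n3)^T.
    rewrite !trmx_chan mulmx_selmx.
    by apply: eq_selmx => i lt_iq /=; [apply/idP/idP | ]; lia.
  exact: submxMl.
have GS_c3 : ((GS GA GB)^T <= (c n3)^T)%MS.
  rewrite trmx_GS addmx_sub // !mulmxA; first exact: submxMl.
  exact: submx_trans (submxMl _ _) c4_c3.
apply: leq_trans (mxrankM_maxl _ _) (leq_trans (mxrankS GS_c3) _).
by rewrite mxrank_tr mxrank_chan.
Qed.

Lemma mxrank_GSmodGM_le_levels GA GB : (n2 <= n1)%N -> (m <= n1)%N ->
  (\rank (GSmodGM GA GB) <= n1 - m + minn m n4)%N.
Proof.
move=> le_n21 le_mn1; have [q1 _ _ _ _] := qdim_ge.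
set W1 := window F2 q 0 (n1 - m); set W2 := window F2 q (n1 - m) n1.
set W3 := window F2 q n1 q.
have split_id : W1 + W2 + W3 = 1%:M.
  by rewrite !add_window ?window_full //; apply/andP; split; lia.
have W3_GS : W3 *m (GS GA GB)^T = 0.
  by rewrite trmx_GS mulmxDr !mulmxA !window_mul_trchan_eq0 ?mul0mx ?addr0.
set Y := selmx F2 q q (subn^~ (n1 - m)%N) (fun i => n1 - m <= i < n1)%N.
have W2_c1 : W2 *m (c n1)^T = Y *m (c m)^T.
  by rewrite (@window_mul_trchan_shift _ _ _ _ (n1 - m)) ?subKn ?leq_subr.
have W2_GS : W2 *m (GS GA GB)^T =
    Y *m (GM GA GB)^T + (W2 *m (c n2)^T - Y *m (c m)^T) *m (GB^T *m (c n4)^T).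
  rewrite trmx_GS trmx_GM !mulmxDr !mulmxA W2_c1 mulmxBl -addrA; congr (_ + _).
  by rewrite mulmxBl addrC subrK.
rewrite -[GSmodGM GA GB]mul1mx -split_id !mulmxDl {3}/GSmodGM mulmxA W3_GS mul0mx addr0.
apply: leq_trans (mxrank_add _ _) (leq_add _ _).
  by apply: leq_trans (mxrankM_maxl _ _) (leq_trans (mxrank_window _ _ _ _) _); lia.
rewrite leq_min; apply/andP; split.
  by apply: leq_trans (mxrankM_maxl _ _) (leq_trans (mxrank_window _ _ _ _) _); lia.
have -> : W2 *m GSmodGM GA GB = W2 *m (GS GA GB)^T *m cokermx (GM GA GB)^T.
  exact: mulmxA.
rewrite W2_GS mulmxDl -mulmxA mulmx_coker mulmx0 add0r.
apply: leq_trans (mxrankM_maxl _ _) (leq_trans (mxrankM_maxr _ _) _).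
by apply: leq_trans (mxrankM_maxr _ _) _; rewrite mxrank_tr mxrank_chan.
Qed.

End Network.

Section Achievability.
Variables n1 n2 n3 n4 m k t : nat.
Hypotheses (lt_n21 : (n2 < n1)%N) (le_mn1 : (m <= n1)%N).
Hypotheses (le_km : (k <= m)%N) (le_kn4 : (k <= n4)%N) (le_kt : (k <= t)%N).
Hypotheses (le_tL : (t <= n1 - m + k)%N) (le_tn3 : (t <= n3)%N).
Local Notation q := (qdim n1 n2 n3 n4 m).
Local Notation GS := (@GS n1 n2 n3 n4 m).
Local Notation GM := (@GM n1 n2 n3 n4 m).
Local Notation c n := (chan q n).
Local Notation L := (n1 - m + k)%N.

(* Both relays send level j - (m - k) of their input to level j of D.  For
   j >= q - k that is M's level j - (q - k) at either relay, so the two copies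
   cancel at D. *)
Definition fwdA : 'M[F2]_q :=
  selmx F2 q q (subn^~ (m - k)%N) (fun i => (q - t <= i) && (m - k <= i))%N.
Definition fwdB : 'M[F2]_q :=
  selmx F2 q q (subn^~ (m - k)%N) (fun i => (q - k <= i) && (m - k <= i))%N.

Definition GA_witness := (c n3)^T *m fwdA.
Definition GB_witness := (c n4)^T *m fwdB.

Lemma chan_mul_GA_witness : c n3 *m GA_witness = fwdA.
Proof.
have [q1 q2 q3 q4 qm] := qdim_ge n1 n2 n3 n4 m.
rewrite /GA_witness /fwdA mulmxA trmx_chan chan_selmx !mulmx_selmx.
by apply: eq_selmx => i lt_iq /=; [apply/idP/idP | move=> *]; lia.
Qed.

Lemma chan_mul_GB_witness : c n4 *m GB_witness = fwdB.
Proof.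
have [q1 q2 q3 q4 qm] := qdim_ge n1 n2 n3 n4 m.
rewrite /GB_witness /fwdB mulmxA trmx_chan chan_selmx !mulmx_selmx.
by apply: eq_selmx => i lt_iq /=; [apply/idP/idP | move=> *]; lia.
Qed.

Lemma GM_witness_eq0 : GM GA_witness GB_witness = 0.
Proof.
have [q1 q2 q3 q4 qm] := qdim_ge n1 n2 n3 n4 m.
rewrite /GM chan_mul_GA_witness chan_mul_GB_witness.
have -> : fwdA *m c m = fwdB *m c m.
  rewrite /fwdA /fwdB chan_selmx !mulmx_selmx.
  by apply: eq_selmx => i lt_iq /=; [apply/idP/idP | move=> *]; lia.
exact: addmx_F2_self.
Qed.

Lemma mxrank_GS_witness : (t <= \rank (GS GA_witness GB_witness))%N.
Proof.
have [q1 q2 q3 q4 qm] := qdim_ge n1 n2 n3 n4 m.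
(* Restricted to D's last t levels and realigned, A's contribution is the
   identity and B's is shifted by n1 - n2 > 0, hence strictly lower triangular. *)
pose Pl := selmx F2 t q (addn^~ (q - t)%N) predT.
pose Pr := selmx F2 q t (subn^~ (L - t)%N) (leq (L - t)%N).
apply: leq_trans (leq_trans _ (mxrankM_maxl _ Pr)) (mxrankM_maxr Pl _).
rewrite /GS chan_mul_GA_witness chan_mul_GB_witness /fwdA /fwdB !chan_selmx.
rewrite !mulmx_selmx mulmxDr mulmxDl /Pl /Pr !mulmx_selmx.
rewrite [X in (_ <= \rank (X + _)%R)%N](_ : _ = 1%:M).
  rewrite mxrank_1_add_selmx_strict_lower // => i lt_it /=; lia.
rewrite -selmx_id; apply: eq_selmx => i lt_it /=; [apply/idP/idP | move=> *]; lia.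
Qed.

Lemma mxrank_GSmodGM_witness : (t <= \rank (GSmodGM GA_witness GB_witness))%N.
Proof.
apply: leq_trans mxrank_GS_witness _; rewrite /GSmodGM GM_witness_eq0 trmx0.
have := mxrank_le_coker (GS GA_witness GB_witness)^T (0 : 'M[F2]_q).
by rewrite mxrank0 addn0 mxrank_tr.
Qed.

End Achievability.

Theorem mainTheorem4 (n1 n2 n3 n4 m : nat) :
  (n2 < n1)%N -> (n4 <= n3)%N -> (m <= n1)%N ->
  lin_capacity n1 n2 n3 n4 m = minn (n1 - m + minn m n4) n3.
Proof.
move=> lt_n21 le_n43 le_mn1; apply/eqP; rewrite eqn_leq; apply/andP; split.
  apply/bigmax_leqP => GA _; apply/bigmax_leqP => GB _.
  by rewrite rate_GSmodGM leq_min mxrank_GSmodGM_le_levels ?mxrank_GSmodGM_le_n3 // ltnW.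
set k := minn m n4; set t := minn (n1 - m + k) n3.
have le_kt : (k <= t)%N by rewrite leq_min leq_addl (leq_trans (geq_minr _ _) le_n43).
set GA := GA_witness n1 n2 n3 n4 m k t; set GB := GB_witness n1 n2 n3 n4 m k.
apply: leq_trans (rate_le_lin_capacity GA GB).
by rewrite rate_GSmodGM mxrank_GSmodGM_witness ?geq_minl ?geq_minr.
Qed.
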